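(* In the dynamic weighted storage system described in the context, the weight reassignment protocol is live: servers can change their weights over time, i.e., the view installed in the system keeps being changed to its successor view, so that new weights (obtained by pairwise weight reassignments) take effect.
   Context: System: a finite set $S=\{s_1,\dots,s_n\}$ of servers and an infinite set of clients; every process knows $S$; processes communicate over reliable links by message passing; the system is asynchronous (no bounds on processing times or message delays, local clocks are unsynchronized counters); processes fail only by crashing (a process is correct if it does not crash); at most $f$ servers crash and $2f+1\le n$. Views: the system passes through a sequence of views $v_0,v_1,\dots$ with $v_{k+1}=v_k.succ$; $v<w$ means $w$ is obtained from $v$ by applying $succ$ one or more times. Each server $s$ has a current view $s.cview$ (initially $v_0$) and a weight in every view; all weights in $v_0$ equal $1$; in every view every server's weight lies strictly between $\mathbb{wl}=n/(2(n-f))$ and $\mathbb{wu}=n/(2f)$, and the total weight of all servers is at most $n$. A weighted majority (quorum) for view $v$ is a set of servers whose weights in $v$ sum to more than $n/2$. The number of views ever requested is finite. Weights for a view $v.succ$ are changed only by pairwise weight reassignments (a server moves an amount $\epsilon$ of its weight for $v.succ$ to a lower-latency server, respecting the bounds $\mathbb{wl},\mathbb{wu}$) made before the involved servers start changing to $v.succ$. View changer (run by each server $s$ with $s.cview=v$): when a local timeout for $v$ expires, $s$ sends $\langle\text{change\_view},v.succ\rangle$ to all servers. Once $s$ has received or sent a change\_view message for $v.succ$, it: forwards $\langle\text{change\_view},v.succ\rangle$ if not already sent; disables read/write operations; stops accepting pairwise reassignments for $v.succ$; sends $\langle\text{state\_update},(val,ts,cid),v,w\rangle$ to all servers, where $(ts,cid,val)$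 is its register state and $w$ its weight in $v$ (at this point $s$ has uninstalled $v$); waits until it has state\_update messages for view $v$ whose weights sum to more than $n/2$; sets its register to the value with the lexicographically largest $(ts,cid)$ among them; sets $s.cview\leftarrow v.succ$ (it installs $v.succ$), restarts the timeout and re-enables read/write operations. A server requests to change its view by sending change\_view. A view $v$ is installed in the system once some server installs $v$ and no server has a current view greater than $v$; $lastview$ denotes the last view installed in the system, and a view is uninstalled from the system when its successor is installed. *)

From mathcomp Require Import all_boot all_order all_algebra.
Set Implicit Arguments. Unset Strict Implicit. Unset Printing Implicit Defensive.
Import Order.TTheory GRing.Theory Num.Theory.
Local Open Scope ring_scope.

(* Views: v_k is represented by the natural number k, v.succ = v.+1. *)

Section Model.
Variables (n : nat) (R : realFieldType) (Val : Type).

Definition server := 'I_n.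
Definition view := nat.
Definition reg_state := (nat * nat * Val)%type.   (* (ts, cid, val) *)

Definition key_le (a b : reg_state) : bool :=
  (a.1.1 < b.1.1)%N || ((a.1.1 == b.1.1) && (a.1.2 <= b.1.2)%N).

Inductive msg :=
| ChangeView of view
| StateUpdate of reg_state & view & R.

(* wl < x < wu with wl = n/(2(n-f)), wu = n/(2f) (for f = 0, wu = +oo) *)
Definition in_bounds (f : nat) (x : R) : Prop :=
  n%:R < 2 * (n - f)%:R * x /\ 2 * f%:R * x < n%:R.

Definition reassign (f : nat) (w w' : server -> R) : Prop :=
  exists (s t : server) (eps : R),
    ((s != t) /\ (0 < eps) /\ (w' s = w s - eps) /\ (w' t = w t + eps) /\ ((forall u, u != s -> u != t -> w' u = w u)) /\ (in_bounds f (w' s)) /\ (in_bounds f (w' t))).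

Inductive reassign_reach (f : nat) : (server -> R) -> (server -> R) -> Prop :=
| rr_refl w : reassign_reach f w w
| rr_step w w' w'' : reassign f w w' -> reassign_reach f w' w'' ->
                     reassign_reach f w w''.

Definition valid_weights (f : nat) (W : view -> server -> R) : Prop :=
  (((forall s, W 0%N s = 1)) /\ ((forall k, reassign_reach f (W k) (W k.+1))) /\ ((forall k s, in_bounds f (W k s))) /\ ((forall k, \sum_(s : server) W k s <= n%:R))).

Record config := Config {
  cview   : server -> view;
  changing: server -> bool;          (* s is changing view (ops disabled, state_update sent) *)
  reg     : server -> reg_state;
  sent    : server -> msg -> Prop;   (* sent p m : p has sent m to all servers *)
  rcvd    : server -> server -> msg -> Prop; (* rcvd q p m : q has received m from p *)
  crashed : server -> Prop
}.

Definition init_config (r0 : server -> reg_state) : config :=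
  Config (fun _ => 0%N) (fun _ => false) r0
         (fun _ _ => False) (fun _ _ _ => False) (fun _ => False).

Inductive action_kind := Timeout | StartChange | Install | Write of reg_state.

Inductive label :=
| Skip
| Deliver of server & server & msg
| Crash of server
| Act of server & action_kind.

Definition same_others (s : server) (c c' : config) : Prop :=
  (forall u, u != s -> cview c' u = cview c u) /\
  (forall u, u != s -> changing c' u = changing c u) /\
  (forall u, u != s -> reg c' u = reg c u) /\
  (forall q p m, rcvd c' q p m <-> rcvd c q p m) /\
  (forall u, crashed c' u <-> crashed c u).

Definition sent_add (c c' : config) (s : server) (ms : msg -> Prop) : Prop :=
  forall p m, sent c' p m <-> (sent c p m \/ (p = s /\ ms m)).

Definition CV_trigger (c : config) (s : server) : Prop :=
  sent c s (ChangeView (cview c s).+1) \/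
  exists p, rcvd c s p (ChangeView (cview c s).+1).

Definition su_quorum (c : config) (s : server) (Q : {set server})
           (r : server -> reg_state) (w : server -> R) : Prop :=
  (forall p, p \in Q -> rcvd c s p (StateUpdate (r p) (cview c s) (w p))) /\
  n%:R / 2 < \sum_(p in Q) w p.

Definition step (W : view -> server -> R) (c : config) (l : label) (c' : config)
  : Prop :=
  match l with
  | Skip =>
      ((cview c' = cview c) /\ (changing c' = changing c) /\ (reg c' = reg c) /\ ((forall p m, sent c' p m <-> sent c p m)) /\ ((forall q p m, rcvd c' q p m <-> rcvd c q p m)) /\ ((forall u, crashed c' u <-> crashed c u)))
  | Deliver q p m =>
      ((sent c p m) /\ (cview c' = cview c) /\ (changing c' = changing c) /\ (reg c' = reg c) /\ ((forall p' m', sent c' p' m' <-> sent c p' m')) /\ ((forall q0 p0 m0, rcvd c' q0 p0 m0 <->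
                            (rcvd c q0 p0 m0 \/ (q0 = q /\ p0 = p /\ m0 = m)))) /\ ((forall u, crashed c' u <-> crashed c u)))
  | Crash s =>
      ((~ crashed c s) /\ (cview c' = cview c) /\ (changing c' = changing c) /\ (reg c' = reg c) /\ ((forall p m, sent c' p m <-> sent c p m)) /\ ((forall q p m, rcvd c' q p m <-> rcvd c q p m)) /\ ((forall u, crashed c' u <-> (crashed c u \/ u = s))))
  | Act s a =>
      ~ crashed c s /\ same_others s c c' /\
      match a with
      | Timeout =>   (* the local timeout for cview expires: send change_view *)
          ((~~ changing c s) /\ (~ sent c s (ChangeView (cview c s).+1)) /\ (cview c' s = cview c s) /\ (changing c' s = changing c s) /\ (reg c' s = reg c s) /\ (sent_add c c' s (fun m => m = ChangeView (cview c s).+1)))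
      | StartChange =>
          ((~~ changing c s) /\ (CV_trigger c s) /\ (cview c' s = cview c s) /\ (changing c' s = true) /\ (reg c' s = reg c s) /\ (sent_add c c' s (fun m =>
                 m = ChangeView (cview c s).+1 \/
                 m = StateUpdate (reg c s) (cview c s) (W (cview c s) s))))
      | Install =>
          changing c s /\
          exists (Q : {set server}) (r : server -> reg_state) (w : server -> R) p0,
          ((su_quorum c s Q r w) /\ (p0 \in Q) /\ ((forall p, p \in Q -> key_le (r p) (r p0))) /\ (reg c' s = r p0) /\ (cview c' s = (cview c s).+1) /\ (changing c' s = false) /\ ((forall p m, sent c' p m <-> sent c p m)))
      | Write r' =>   (* read/write operations (enabled only when not changing) *)
          ((~~ changing c s) /\ (cview c' s = cview c s) /\ (changing c' s = changing c s) /\ (reg c' s = r') /\ ((forall p m, sent c' p m <-> sent c p m)))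
      end
  end.

Definition enabled_start (c : config) (s : server) : Prop :=
  ~~ changing c s /\ CV_trigger c s.

Definition enabled_install (c : config) (s : server) : Prop :=
  changing c s /\ exists Q r w, su_quorum c s Q r w.

Definition correct (run : nat -> config) (s : server) : Prop :=
  forall t, ~ crashed (run t) s.

Definition admissible (f : nat) (W : view -> server -> R)
    (run : nat -> config) (lbl : nat -> label) : Prop :=
  (((exists r0, run 0%N = init_config r0)) /\ ((forall t, step W (run t) (lbl t) (run t.+1))) /\ (
      (forall A : {set server}, (forall s, s \in A -> ~ correct run s) ->
                                (#|A| <= f)%N)) /\ (
      (forall t p q m, correct run p -> correct run q -> sent (run t) p m ->
                       exists t', rcvd (run t') q p m)) /\ (
      (forall s t0, correct run s ->
         (forall t, (t0 <= t)%N -> enabled_start (run t) s) ->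
         exists t, (t0 <= t)%N /\ lbl t = Act s StartChange)) /\ ((forall s t0, correct run s ->
         (forall t, (t0 <= t)%N -> enabled_install (run t) s) ->
         exists t, (t0 <= t)%N /\ lbl t = Act s Install)) /\ (
      (exists K, forall t s k, sent (run t) s (ChangeView k) -> (k <= K)%N))).

Definition installed_in_system (c : config) (v : view) : Prop :=
  (exists s, cview c s = v) /\ (forall s, (cview c s <= v)%N).

End Model.

From mathcomp Require Import all_boot all_order all_algebra.
From mathcomp Require Import zify lra.
From Stdlib Require Import Classical.
Set Implicit Arguments.
Unset Strict Implicit.
Unset Printing Implicit Defensive.
Import Order.TTheory GRing.Theory Num.Theory.
Local Open Scope ring_scope.

(* By induction on k <= v.succ, every correct server eventually reaches view k.
   A correct server that requested v.succ has requested every k.succ with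
   k <= v.  A correct server at k receives that request over the reliable links,
   so by fairness it eventually uninstalls k and sends everyone its
   state_update for k.  At most f servers crash and every weight exceeds
   n/(2(n-f)), so the state_updates of the correct servers form a weighted
   majority for k: a correct server changing from k eventually holds this
   quorum, and fairness makes it install k.succ.  The first time some server
   reaches v.succ, v.succ is installed in the system. *)

Lemma persist_leq (P : nat -> Prop) :
  (forall t, P t -> P t.+1) -> forall t t', (t <= t')%N -> P t -> P t'.
Proof.
by move=> PS; apply: (homo_leq (r := fun A B : Prop => A -> B)) => // B A C AB BC /AB.
Qed.

Lemma weighted_majority_of_large_set (R : realFieldType) (n f : nat)
    (w : server n -> R) (Q : {set server n}) :
  (f < n)%N -> (forall p, n%:R < 2 * (n - f)%:R * w p) -> (#|~: Q| <= f)%N ->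
  n%:R / 2 < \sum_(p in Q) w p.
Proof.
move=> lt_fn wl_lt_w card_notQ.
have card_Q : (n - f <= #|Q|)%N by have := cardsC Q; rewrite card_ord; lia.
have Q_has : has (mem Q) (index_enum (server n)).
  have /card_gt0P [p Qp] : (0 < #|Q|)%N by lia.
  by apply/hasP; exists p; rewrite ?mem_index_enum.
have := ltr_sum Q_has (fun p _ => wl_lt_w p).
rewrite sumr_const -mulr_sumr; set S := \sum_(p in Q) w p => lt_nQ_S.
have le_nf_nQ : (n - f)%:R * n%:R <= n%:R *+ #|Q| :> R.
  by rewrite -mulrnA -natrM ler_nat; nia.
have nf_gt0 : 0 < (n - f)%:R :> R by rewrite ltr0n subn_gt0.
rewrite ltr_pdivrMr //; set X := n%:R *+ #|Q| in lt_nQ_S le_nf_nQ; nra.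
Qed.

Section ViewChanger.
Variables (R : realFieldType) (Val : Type) (n : nat) (W : view -> server n -> R).
Variables (run : nat -> config n R Val) (lbl : nat -> label n R Val).

(* The paper's "u has uninstalled k": u has sent its state_update for k. *)
Definition uninstalled (c : config n R Val) (u : server n) (k : view) : bool :=
  (k < cview c u)%N || ((k == cview c u) && changing c u).

Hypothesis run_step : forall t, step W (run t) (lbl t) (run t.+1).

Variant local_step_spec (t : nat) (u : server n) : Prop :=
| LocalIdle of cview (run t.+1) u = cview (run t) u
    & changing (run t.+1) u = changing (run t) u
| LocalStartChange of cview (run t.+1) u = cview (run t) u
    & ~~ changing (run t) u & changing (run t.+1) u
    & sent (run t.+1) u (ChangeView R Val (cview (run t) u).+1)
    & sent (run t.+1) u
        (StateUpdate (reg (run t) u) (cview (run t) u) (W (cview (run t) u) u))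
| LocalInstall of cview (run t.+1) u = (cview (run t) u).+1
    & changing (run t) u & ~~ changing (run t.+1) u.

Lemma local_stepP t u : local_step_spec t u.
Proof.
have := run_step t; case: (lbl t) => [|q p m|s|s a] /=.
- by move=> [cv_eq [ch_eq _]]; apply: LocalIdle; rewrite ?cv_eq ?ch_eq.
- by move=> [_ [cv_eq [ch_eq _]]]; apply: LocalIdle; rewrite ?cv_eq ?ch_eq.
- by move=> [_ [cv_eq [ch_eq _]]]; apply: LocalIdle; rewrite ?cv_eq ?ch_eq.
move=> [_ [[cv_others [ch_others _]] act]].
have [->|neq_us] := eqVneq u s; last first.
  by apply: LocalIdle; [apply: cv_others | apply: ch_others].
case: a act => [|||r'] /=.
- by move=> [_ [_ [cv_eq [ch_eq _]]]]; apply: LocalIdle.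
- move=> [not_ch [_ [cv_eq [ch_eq [_ sent_new]]]]].
  apply: LocalStartChange; rewrite ?ch_eq //; apply/sent_new; right.
    by split => //; left.
  by split => //; right.
- move=> [ch [Q [r [w [p0 [_ [_ [_ [_ [cv_eq [ch_eq _]]]]]]]]]]].
  by apply: LocalInstall; rewrite ?ch_eq.
- by move=> [_ [cv_eq [ch_eq _]]]; apply: LocalIdle.
Qed.

Lemma sent_step t p m : sent (run t) p m -> sent (run t.+1) p m.
Proof.
have := run_step t; case: (lbl t) => [|q p' m'|s|s a] /=.
- by move=> [_ [_ [_ [sent_eq _]]]] /sent_eq.
- by move=> [_ [_ [_ [_ [sent_eq _]]]]] /sent_eq.
- by move=> [_ [_ [_ [_ [sent_eq _]]]]] /sent_eq.
move=> [_ [_ act]] sent_m; case: a act => [|||r'] /=.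
- by move=> [_ [_ [_ [_ [_ sent_eq]]]]]; apply/sent_eq; left.
- by move=> [_ [_ [_ [_ [_ sent_eq]]]]]; apply/sent_eq; left.
- by move=> [_ [Q [r [w [p0 [_ [_ [_ [_ [_ [_ sent_eq]]]]]]]]]]]; apply/sent_eq.
- by move=> [_ [_ [_ [_ sent_eq]]]]; apply/sent_eq.
Qed.

Lemma rcvd_step t q p m : rcvd (run t) q p m -> rcvd (run t.+1) q p m.
Proof.
have := run_step t; case: (lbl t) => [|q' p' m'|s|s a] /=.
- by move=> [_ [_ [_ [_ [rcvd_eq _]]]]] /rcvd_eq.
- by move=> [_ [_ [_ [_ [_ [rcvd_eq _]]]]]] rcvd_m; apply/rcvd_eq; left.
- by move=> [_ [_ [_ [_ [_ [rcvd_eq _]]]]]] /rcvd_eq.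
- by move=> [_ [[_ [_ [_ [rcvd_eq _]]]] _]] /rcvd_eq.
Qed.

Lemma sent_change_view_step t u j :
  sent (run t.+1) u (ChangeView R Val j) ->
  sent (run t) u (ChangeView R Val j) \/ j = (cview (run t) u).+1.
Proof.
have := run_step t; case: (lbl t) => [|q p' m'|s|s a] /=.
- by move=> [_ [_ [_ [sent_eq _]]]] /sent_eq; left.
- by move=> [_ [_ [_ [_ [sent_eq _]]]]] /sent_eq; left.
- by move=> [_ [_ [_ [_ [sent_eq _]]]]] /sent_eq; left.
move=> [_ [_ act]]; case: a act => [|||r'] /=.
- move=> [_ [_ [_ [_ [_ sent_eq]]]]] /sent_eq [|[-> [->]]]; by [left | right].
- move=> [_ [_ [_ [_ [_ sent_eq]]]]] /sent_eq [|[-> [[->]|//]]]; by [left | right].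
- by move=> [_ [Q [r [w [p0 [_ [_ [_ [_ [_ [_ sent_eq]]]]]]]]]]] /sent_eq; left.
- by move=> [_ [_ [_ [_ sent_eq]]]] /sent_eq; left.
Qed.

Lemma changing_after_start t s :
  lbl t = Act R s (StartChange Val) -> changing (run t.+1) s.
Proof.
have := run_step t => + lbl_t; rewrite lbl_t /=.
by move=> [_ [_ [_ [_ [_ [-> _]]]]]].
Qed.

Lemma cview_after_install t s :
  lbl t = Act R s (Install Val) -> cview (run t.+1) s = (cview (run t) s).+1.
Proof.
have := run_step t => + lbl_t; rewrite lbl_t /=.
by move=> [_ [_ [_ [Q [r [w [p0 [_ [_ [_ [_ [-> _]]]]]]]]]]]].
Qed.

Lemma cview_step t u :
  (cview (run t) u <= cview (run t.+1) u <= (cview (run t) u).+1)%N.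
Proof. by case: (local_stepP t u) => [-> _|-> *|-> *]; rewrite ?leqnSn ?leqnn. Qed.

Lemma cview_le t t' u : (t <= t')%N -> (cview (run t) u <= cview (run t') u)%N.
Proof.
by apply: (homo_leq (f := fun t => cview (run t) u) leqnn leq_trans) => i;
  case/andP: (cview_step i u).
Qed.

Lemma rcvd_le t t' q p m : (t <= t')%N -> rcvd (run t) q p m -> rcvd (run t') q p m.
Proof. by apply: (persist_leq (P := fun t => rcvd (run t) q p m)) => i /rcvd_step. Qed.

Lemma uninstalled_le t t' u k :
  (t <= t')%N -> uninstalled (run t) u k -> uninstalled (run t') u k.
Proof.
apply: (persist_leq (P := fun t => uninstalled (run t) u k)) => {}t.
rewrite /uninstalled.
case: (local_stepP t u) => [-> -> //|-> _ -> _ _|-> _ _].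
  by rewrite andbT => /orP [->|/andP [->]]; rewrite ?orbT.
by case/orP=> [lt_kc|/andP [/eqP-> _]]; rewrite ltnS ?(ltnW lt_kc) ?leqnn.
Qed.

Hypothesis run_init : exists r0, run 0%N = init_config R r0.

Lemma uninstalled_sent t u k : uninstalled (run t) u k ->
  (exists r, sent (run t) u (StateUpdate r k (W k u))) /\
  sent (run t) u (ChangeView R Val k.+1).
Proof.
elim: t k => [|t IH] k; first by case: run_init => r0 ->; rewrite /uninstalled andbF.
have IH' : uninstalled (run t) u k ->
    (exists r, sent (run t.+1) u (StateUpdate r k (W k u))) /\
    sent (run t.+1) u (ChangeView R Val k.+1).
  by move=> /IH [[r sent_su] sent_cv]; split; [exists r|]; apply: sent_step.
rewrite /uninstalled in IH' *.
case: (local_stepP t u) => [-> ->|-> _ -> sent_cv sent_su|-> ch /negbTE ->] //.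
- rewrite andbT => /orP [lt_k|/eqP ->]; first by apply: IH'; rewrite lt_k.
  by split; first exists (reg (run t) u).
- rewrite andbF orbF ltnS leq_eqVlt => /orP [/eqP k_eq|lt_k]; apply: IH'.
    by rewrite k_eq eqxx ch orbT.
  by rewrite lt_k.
Qed.

Lemma sent_change_view_le t u j :
  sent (run t) u (ChangeView R Val j) -> (j <= (cview (run t) u).+1)%N.
Proof.
elim: t => [|t IH]; first by case: run_init => r0 ->.
case/andP: (cview_step t u) => le_cv _.
case/sent_change_view_step => [/IH le_j|->]; last by rewrite ltnS.
by apply: leq_trans le_j _; rewrite ltnS.
Qed.

Lemma sent_change_view_below t u v k :
  sent (run t) u (ChangeView R Val v.+1) -> (k <= v)%N ->
  sent (run t) u (ChangeView R Val k.+1).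
Proof.
move=> sent_v; rewrite leq_eqVlt => /orP [/eqP -> //|lt_kv].
have le_v := sent_change_view_le sent_v; rewrite ltnS in le_v.
apply: (proj2 (@uninstalled_sent t u k _)).
by rewrite /uninstalled (leq_trans lt_kv le_v).
Qed.

Lemma installed_in_system_of_reached k :
  (exists t u, (k <= cview (run t) u)%N) -> exists t, installed_in_system (run t) k.
Proof.
move=> [t [u reached]].
have ex_reached : exists t, [exists u, (k <= cview (run t) u)%N].
  by exists t; apply/existsP; exists u.
case: (ex_minnP ex_reached) => tm /existsP [u' reached'] tm_min.
have below u'' (t' : nat) : (t' < tm)%N -> (cview (run t') u'' < k)%N.
  move=> lt_tm; rewrite ltnNge; apply/negP => le_k.
  by have := tm_min t' (introT existsP (ex_intro _ u'' le_k)); rewrite leqNgt lt_tm.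
have le_k u'' : (cview (run tm) u'' <= k)%N.
  case: tm below {reached' tm_min} => [|tm] below; first by case: run_init => r0 ->.
  by case/andP: (cview_step tm u'') => _ /leq_trans; apply; apply: below.
exists tm; split=> //.
by exists u'; apply/eqP; rewrite eqn_leq reached' le_k.
Qed.

Variable f : nat.
Hypothesis lt_f_n : (f < n)%N.
Hypothesis weight_gt_wl : forall k p, n%:R < 2 * (n - f)%:R * W k p.
Hypothesis crash_bound : forall A : {set server n},
  (forall s, s \in A -> ~ correct run s) -> (#|A| <= f)%N.
Hypothesis reliable_links : forall t p q m,
  correct run p -> correct run q -> sent (run t) p m -> exists t', rcvd (run t') q p m.
Hypothesis start_fairness : forall s t0, correct run s ->
  (forall t, (t0 <= t)%N -> enabled_start (run t) s) ->
  exists t, (t0 <= t)%N /\ lbl t = Act R s (StartChange Val).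
Hypothesis install_fairness : forall s t0, correct run s ->
  (forall t, (t0 <= t)%N -> enabled_install (run t) s) ->
  exists t, (t0 <= t)%N /\ lbl t = Act R s (Install Val).

Lemma correct_set : exists C : {set server n}, forall p, p \in C <-> correct run p.
Proof.
have decide p : exists b : bool, b <-> correct run p.
  by case: (classic (correct run p)) => ?; [exists true | exists false].
have [b b_correct] := fin_all_exists decide.
by exists [set p | b p] => p; rewrite inE.
Qed.

Lemma correct_weighted_majority (C : {set server n}) k :
  (forall p, p \in C <-> correct run p) -> n%:R / 2 < \sum_(p in C) W k p.
Proof.
move=> C_correct; apply: weighted_majority_of_large_set lt_f_n (weight_gt_wl k) _.
by apply: crash_bound => p; rewrite inE => /negP notCp /C_correct.
Qed.

Lemma eventually_uninstalled k p s0 t0 :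
  correct run p -> correct run s0 -> sent (run t0) s0 (ChangeView R Val k.+1) ->
  (exists t, (k <= cview (run t) p)%N) -> exists t, uninstalled (run t) p k.
Proof.
move=> p_ok s0_ok sent_req [t1 reached].
have [t2 rcvd_req] := reliable_links s0_ok p_ok sent_req.
apply: NNPP => never.
have idle_at_k t : (t1 <= t)%N -> cview (run t) p = k /\ ~~ changing (run t) p.
  move=> le_t; have /negP : ~ uninstalled (run t) p k.
    by move=> ?; apply: never; exists t.
  rewrite /uninstalled negb_or -leqNgt => /andP [le_cv].
  have -> : cview (run t) p = k.
    by apply/eqP; rewrite eqn_leq le_cv (leq_trans reached (cview_le p le_t)).
  by rewrite eqxx.
have enabled t : (maxn t1 t2 <= t)%N -> enabled_start (run t) p.
  rewrite geq_max => /andP [le1 le2]; have [cv_k not_ch] := idle_at_k t le1.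
  by split => //; right; exists s0; rewrite cv_k; apply: rcvd_le le2 rcvd_req.
have [t [le_t lbl_t]] := start_fairness p_ok enabled.
have le_t1 : (t1 <= t.+1)%N by apply/ltnW/(leq_trans (leq_maxl t1 t2)).
by have [_ /negP] := idle_at_k t.+1 le_t1; rewrite (changing_after_start lbl_t).
Qed.

Lemma eventually_state_update_received k p q s0 t0 :
  correct run p -> correct run q -> correct run s0 ->
  sent (run t0) s0 (ChangeView R Val k.+1) ->
  (exists t, (k <= cview (run t) p)%N) ->
  exists t r, rcvd (run t) q p (StateUpdate r k (W k p)).
Proof.
move=> p_ok q_ok s0_ok sent_req reached.
have [t unins] := eventually_uninstalled p_ok s0_ok sent_req reached.
have [[r sent_su] _] := uninstalled_sent unins.
by have [t' rcvd_su] := reliable_links p_ok q_ok sent_su; exists t', r.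
Qed.

Lemma eventually_reaches_succ k s0 t0 :
  correct run s0 -> sent (run t0) s0 (ChangeView R Val k.+1) ->
  (forall p, correct run p -> exists t, (k <= cview (run t) p)%N) ->
  forall q, correct run q -> exists t, (k.+1 <= cview (run t) q)%N.
Proof.
move=> s0_ok sent_req reached q q_ok.
have [C C_correct] := correct_set.
have su_from p : exists x : nat * reg_state Val,
    p \in C -> rcvd (run x.1) q p (StateUpdate x.2 k (W k p)).
  have [p_ok|p_crashed] := classic (correct run p).
    have [t [r rcvd_su]] :=
      eventually_state_update_received p_ok q_ok s0_ok sent_req (reached p p_ok).
    by exists (t, r).
  by exists (0%N, reg (run 0%N) p) => /C_correct.
have [g g_rcvd] := fin_all_exists su_from.
have [t2 q_unins] := eventually_uninstalled q_ok s0_ok sent_req (reached q q_ok).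
apply: NNPP => stuck.
have changing_at_k t : (t2 <= t)%N -> cview (run t) q = k /\ changing (run t) q.
  move=> le_t; have /orP [lt_k|/andP [/eqP <- //]] := uninstalled_le le_t q_unins.
  by exfalso; apply: stuck; exists t.
have enabled t : (maxn t2 (\max_p (g p).1) <= t)%N -> enabled_install (run t) q.
  rewrite geq_max => /andP [le2 le_g]; have [cv_k ch] := changing_at_k t le2.
  split => //; exists C, (fun p => (g p).2), (W k); split.
    move=> p Cp; rewrite cv_k; apply: rcvd_le (g_rcvd p Cp).
    exact: leq_trans (leq_bigmax p) le_g.
  exact: correct_weighted_majority.
have [t [le_t lbl_t]] := install_fairness q_ok enabled.
apply: stuck; exists t.+1; rewrite (cview_after_install lbl_t).
by have [-> _] := changing_at_k t (leq_trans (leq_maxl _ _) le_t).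
Qed.

End ViewChanger.

Theorem theorem1 (R : realFieldType) (Val : Type) (n f : nat)
    (W : view -> server n -> R)
    (run : nat -> config n R Val) (lbl : nat -> label n R Val) :
  (2 * f + 1 <= n)%N ->
  valid_weights f W ->
  admissible f W run lbl ->
  forall (v : view),
    (exists t s, correct run s /\ sent (run t) s (ChangeView R Val v.+1)) ->
    (exists t, installed_in_system (run t) v.+1) /\
    (forall s, correct run s -> exists t, (v.+1 <= cview (run t) s)%N).
Proof.
move=> le_2f1_n [_ [_ [W_bounds _]]].
move=> [run_init [run_step [crash_bound [links [start_fair [install_fair _]]]]]].
move=> v [t [s [s_ok sent_req]]].
have lt_f_n : (f < n)%N by lia.
have reached k : (k <= v.+1)%N ->
    forall q, correct run q -> exists t, (k <= cview (run t) q)%N.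
  elim: k => [|k IH] le_k; first by exists 0%N.
  have sent_k := sent_change_view_below run_step run_init sent_req (ltnSE le_k).
  apply: (eventually_reaches_succ run_step run_init lt_f_n
    (fun k p => proj1 (W_bounds k p)) crash_bound links start_fair install_fair
    s_ok sent_k).
  exact: IH (ltnW le_k).
split; last exact: reached.
apply: installed_in_system_of_reached run_step run_init _ _.
by have [t' le_v] := reached _ (leqnn _) s s_ok; exists t', s.
Qed.
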